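(* Consider the finite game with players $\mathcal{M}=\{1,\dots,M\}$, common action set $\mathcal{N}$ and costs $c_i(\mathbf{a}) = \frac{\sigma^2}{h_{ia_i}}\,\frac{\beta_i}{[1-\sum_{l\in\mathcal{M}_{a_i}(\mathbf{a})}\beta_l]^+}$, and suppose $h_{ij}=h_j$ and $\beta_i=\beta$ for all $i\in\mathcal{M}$, $j\in\mathcal{N}$. Then the steady states of MAPC$^\ast$ are the Pareto efficient Nash equilibria of the game.
   Context: Uplink cellular model: mobiles $\mathcal{M}=\{1,\dots,M\}$, BSs $\mathcal{N}=\{1,\dots,N\}$, power gains $h_{ij}>0$, noise power $\sigma^2>0$, target SINRs $\gamma_i>0$, $\beta_i=\gamma_i/(1+\gamma_i)$. Association profile $\mathbf{a}\in\mathcal{N}^M$, $\mathcal{M}_j(\mathbf{a})=\{l: a_l=j\}$, $[x]^+=\max(x,0)$, positive$/0=+\infty$; $(b,\mathbf{a}_{-i})$ replaces $a_i$ by $b$. Algorithm MAPC$^\ast$: at times $t=0,1,2,\dots$, mobile $i=1+(t\bmod M)$ changes its association at $t+1$ iff $a_i(t)\notin\arg\min_{j\in\mathcal{N}}\big(c_i(j,\mathbf{a}(t)_{-i}),\ \sum_{l\in\mathcal{M}_j((j,\mathbf{a}(t)_{-i}))}\beta_l\big)$ (lexicographic minimization), in which case $a_i(t+1)$ is chosen from this argmin. A steady state of MAPC$^\ast$ is a profile from which no mobile ever changes its association. $\mathbf{a}$ is a Nash equilibrium if $a_i\in\arg\min_{b\in\mathcal{N}}c_i(b,\mathbf{a}_{-i})$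 for all $i$. $\mathbf{a}$ is Pareto dominated by $\mathbf{a}'$ if $c_i(\mathbf{a}')\le c_i(\mathbf{a})$ for all $i$ with strict inequality for some $i$; $\mathbf{a}$ is Pareto efficient if no profile Pareto dominates it. Standing assumption: there exists at least one feasible association, i.e. some $\mathbf{a}$ with $\sum_{l\in\mathcal{M}_j(\mathbf{a})}\beta_l<1$ for all $j$. *)

From HB Require Import structures.
From mathcomp Require Import all_boot all_order all_algebra.
From mathcomp Require Import reals constructive_ereal.
Set Implicit Arguments. Unset Strict Implicit. Unset Printing Implicit Defensive.
Import Order.TTheory GRing.Theory Num.Theory.
Local Open Scope ring_scope.

Section Model.
Variables (R : realType) (M N : nat).
(* mobiles are 'I_M, base stations are 'I_N *)
Variables (h : 'I_M -> 'I_N -> R) (sigma2 : R) (gamma : 'I_M -> R).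

Definition profile := {ffun 'I_M -> 'I_N}.

Definition beta (i : 'I_M) : R := gamma i / (1 + gamma i).

Definition load (a : profile) (j : 'I_N) : R := \sum_(l < M | a l == j) beta l.

Definition upd (a : profile) (i : 'I_M) (b : 'I_N) : profile :=
  [ffun k => if k == i then b else a k].

(* c_i(a) = sigma^2/h_{i a_i} * beta_i / [1 - load]^+ , with positive/0 = +oo *)
Definition cost (i : 'I_M) (a : profile) : \bar R :=
  if 0 < 1 - load a (a i)
  then ((sigma2 / h i (a i)) * beta i / (1 - load a (a i)))%:E
  else +oo%E.

Definition lex_le (x y : \bar R * R) : Prop :=
  (x.1 < y.1)%E \/ (x.1 = y.1 /\ x.2 <= y.2).

Definition mapc_obj (a : profile) (i : 'I_M) (j : 'I_N) : \bar R * R :=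
  (cost i (upd a i j), load (upd a i j) j).

Definition in_argmin (a : profile) (i : 'I_M) (b : 'I_N) : Prop :=
  forall j : 'I_N, lex_le (mapc_obj a i b) (mapc_obj a i j).

(* one MAPC* step at time t (mobile i with i = t mod M, 0-based) *)
Definition mapc_step (t : nat) (a a' : profile) : Prop :=
  forall i : 'I_M, (i : nat) = (t %% M)%N ->
    (forall k, k != i -> a' k = a k) /\
    (in_argmin a i (a i) -> a' i = a i) /\
    (~ in_argmin a i (a i) -> in_argmin a i (a' i)).

Definition mapc_traj (a : profile) (tr : nat -> profile) : Prop :=
  tr 0%N = a /\ forall t, mapc_step t (tr t) (tr t.+1).

Definition steady_state (a : profile) : Prop :=
  forall tr, mapc_traj a tr -> forall t, tr t = a.

Definition nash (a : profile) : Prop :=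
  forall (i : 'I_M) (b : 'I_N), (cost i a <= cost i (upd a i b))%E.

Definition pareto_dominated (a a' : profile) : Prop :=
  (forall i, (cost i a' <= cost i a)%E) /\ exists i, (cost i a' < cost i a)%E.

Definition pareto_efficient (a : profile) : Prop :=
  forall a', ~ pareto_dominated a a'.

Definition feasible (a : profile) : Prop := forall j, load a j < 1.

End Model.

From HB Require Import structures.
From mathcomp Require Import all_boot all_order all_algebra.
From mathcomp Require Import reals constructive_ereal.
From mathcomp Require Import lra ring zify.
From Stdlib Require Import ClassicalEpsilon.
Import Order.TTheory GRing.Theory Num.Theory.
Set Implicit Arguments. Unset Strict Implicit. Unset Printing Implicit Defensive.
Local Open Scope ring_scope.

(* In the symmetric game the cost of a mobile depends only on its base station j
   and on the number n of mobiles sharing it: it is F_j(n) = w_j / (1 - n b) while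
   n b < 1, with w_j = sigma^2 b / h_j, and +oo otherwise.  A profile is a steady
   state of MAPC* exactly when every mobile's station is a lexicographic best
   response, which in particular makes it a Nash equilibrium.

   Such a profile a is Pareto efficient.  Let a' make no mobile worse off, T be the
   largest cost in a and m the largest occupancy of a station charging T.  At each
   station, with occupancies n in a and n' in a' and E the change in the number of
   mobiles paying T, the Nash and tie-break conditions give m (n' - n) <= E, and in
   case of equality (n' - n) T / (1 - (m - 1) b) <= n' F(n') - n F(n).  No mobile
   can start paying T, so sum E <= 0 while sum (n' - n) = 0: equality holds at every
   station, and the total cost sum n F(n) cannot decrease.

   Conversely, let a Nash equilibrium violate the tie-break: a mobile at station k
   could join station j, holding x mobiles, at equal cost, although k holds more
   than x + 1 mobiles.  Then sending j's mobiles to k and x + 1 other mobiles of k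
   to j is a Pareto improvement. *)

Section Congestion.
Variables (R : realFieldType) (b : R).
Hypothesis b_gt0 : 0 < b.

Definition uncongested (k : nat) : bool := 0 < 1 - k%:R * b.

Definition congestion (w : R) (k : nat) : R := w / (1 - k%:R * b).

Lemma uncongestedW k k' : (k <= k')%N -> uncongested k' -> uncongested k.
Proof.
rewrite /uncongested -(ler_nat R) => le_kk' fk'.
have : 0 <= (k'%:R - k%:R) * b by rewrite mulr_ge0 ?subr_ge0 // ltW.
lra.
Qed.

Variable w : R.
Hypothesis w_gt0 : 0 < w.

Lemma congestion_gt0 k : uncongested k -> 0 < congestion w k.
Proof. by move=> fk; rewrite divr_gt0. Qed.

Lemma congestion_lt k k' : (k < k')%N -> uncongested k' ->
  congestion w k < congestion w k'.
Proof.
move=> lt_kk' fk'; have fk := uncongestedW (ltnW lt_kk') fk'.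
move: lt_kk' fk fk'; rewrite /uncongested /congestion -(ltr_nat R).
move: k%:R k'%:R => x x' lt_xx' fx fx'.
rewrite ltr_pdivrMr // mulrAC ltr_pdivlMr // ltr_pM2l //.
have : 0 < (x' - x) * b by rewrite mulr_gt0 ?subr_gt0.
lra.
Qed.

Lemma congestion_le k k' : (k <= k')%N -> uncongested k' ->
  congestion w k <= congestion w k'.
Proof.
rewrite leq_eqVlt => /orP[/eqP -> // | lt_kk' fk'].
exact/ltW/congestion_lt.
Qed.

Lemma mul_congestionB k k' : uncongested k -> uncongested k' ->
  k'%:R * congestion w k' - k%:R * congestion w k =
  (k'%:R - k%:R) * congestion (congestion w k') k.
Proof.
rewrite /uncongested /congestion; move: k%:R k'%:R => x x' fx fx'.
by field; lra.
Qed.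

Lemma congestion_succ k : uncongested k.+1 ->
  congestion w k = congestion w k.+1 * (1 - b / (1 - k%:R * b)).
Proof.
move=> fk1; have fk := uncongestedW (leqnSn k) fk1.
move: fk fk1; rewrite /uncongested /congestion -natr1.
move: k%:R => x fx fx1; by field; lra.
Qed.

End Congestion.

Lemma congestion_pred_le (R : realFieldType) (b w w' : R) (x y : nat) :
  0 < b -> 0 < w' -> (x < y)%N -> uncongested b y.+1 ->
  congestion b w y.+1 = congestion b w' x.+1 ->
  congestion b w y <= congestion b w' x.
Proof.
move=> b_gt0 w'_gt0 lt_xy fy1 eq_cong.
have fx1 := uncongestedW b_gt0 (leqW lt_xy) fy1.
have fy := uncongestedW b_gt0 (leqnSn y) fy1.
have fx := uncongestedW b_gt0 (ltnW lt_xy) fy.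
have le_xy : x%:R <= y%:R :> R by rewrite ler_nat ltnW.
have shrink : b / (1 - x%:R * b) <= b / (1 - y%:R * b).
  by rewrite ler_pM2l // lef_pV2 ?posrE //; nra.
rewrite (congestion_succ b_gt0 w fy1) (congestion_succ b_gt0 w' fx1) eq_cong.
by rewrite ler_pM2l ?congestion_gt0 //; lra.
Qed.

Lemma ler_lt_sum (R : numDomainType) (I : finType) (F G : I -> R) (k : I) :
  (forall i, F i <= G i) -> F k < G k -> \sum_i F i < \sum_i G i.
Proof.
move=> le_FG lt_k; rewrite (bigD1 k) //= [X in _ < X](bigD1 k) //=.
by rewrite ltr_leD // ler_sum.
Qed.

Lemma sum_balance (R : realDomainType) (I : finType) (D E G : I -> R) (m Q : R) :
  \sum_i D i = 0 -> \sum_i E i <= 0 -> (forall i, m * D i <= E i) ->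
  (forall i, E i = m * D i -> D i * Q <= G i) -> 0 <= \sum_i G i.
Proof.
move=> sumD0 sumE_le0 le_DE DG.
have E_eq i : E i = m * D i.
  apply/eqP; rewrite -subr_eq0; apply/eqP; move: i isT.
  apply: psumr_eq0P => [i _|]; first by rewrite subr_ge0.
  apply/eqP; rewrite eq_le sumr_ge0 ?andbT => [|i _]; last by rewrite subr_ge0.
  by rewrite sumrB -mulr_sumr sumD0 mulr0 subr0.
apply: le_trans (ler_sum _ (fun i _ => DG i (E_eq i))).
by rewrite -mulr_suml sumD0 mul0r.
Qed.

Section StationBalance.
Variables (R : realFieldType) (b w T : R) (m : nat).
Hypotheses (b_gt0 : 0 < b) (w_gt0 : 0 < w) (m_gt0 : (0 < m)%N) (fm : uncongested b m).

Local Notation f := (congestion b w).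

Definition users_paying (k : nat) : R := k%:R * (f k == T)%:R.

Lemma users_paying_eq0 k : ~ ((0 < k)%N /\ f k = T) -> users_paying k = 0.
Proof.
move=> not_top; rewrite /users_paying; case: (posnP k) => [-> | k_gt0].
  by rewrite mul0r.
by case: eqP => [fkT|]; [case: not_top | rewrite mulr0].
Qed.

Lemma users_payingE k : f k = T -> users_paying k = k%:R.
Proof. by rewrite /users_paying => ->; rewrite eqxx mulr1. Qed.

Lemma balance_saturated n n' :
  (0 < n)%N -> uncongested b n -> f n = T -> (n <= m)%N ->
  ((0 < n')%N -> uncongested b n' /\ f n' <= T) ->
  m%:R * (n'%:R - n%:R) <= users_paying n' - users_paying n /\
  (n'%:R - n%:R) * congestion b T m.-1 <= n'%:R * f n' - n%:R * f n.
Proof.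
move=> n_gt0 fn fnT le_nm Hn'.
have T_gt0 : 0 < T by rewrite -fnT congestion_gt0.
have : (n' <= n)%N.
  rewrite leqNgt; apply/negP => lt_nn'; have [fn' fn'T] := Hn' (ltn_trans n_gt0 lt_nn').
  have := congestion_lt b_gt0 w_gt0 lt_nn' fn'; rewrite fnT; lra.
rewrite leq_eqVlt => /orP[/eqP -> | lt_n'n]; first by rewrite !subrr mulr0 mul0r.
have fn' := uncongestedW b_gt0 (ltnW lt_n'n) fn.
have fn'_lt := congestion_lt b_gt0 w_gt0 lt_n'n fn; rewrite fnT in fn'_lt.
rewrite (users_payingE fnT) (@users_paying_eq0 n'); last by case=> _ /eqP; rewrite lt_eqF.
split.
  have : 1 <= n%:R - n'%:R :> R by rewrite lerBrDl natr1 ler_nat.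
  have : n%:R <= m%:R :> R by rewrite ler_nat.
  have : 0 <= m%:R :> R by [].
  nra.
have := mul_congestionB w fn' fn; rewrite fnT.
have : congestion b T n' <= congestion b T m.-1.
  apply: (congestion_le b_gt0 T_gt0); first by rewrite -ltnS prednK // (leq_trans lt_n'n).
  exact: (uncongestedW b_gt0 (leq_pred m) fm).
have : 1 <= n%:R - n'%:R :> R by rewrite lerBrDl natr1 ler_nat.
nra.
Qed.

Lemma balance_unsaturated n n' : ~ ((0 < n)%N /\ f n = T) ->
  ((0 < n)%N -> uncongested b n /\ f n <= T) ->
  ((0 < n')%N -> uncongested b n' /\ f n' <= T) ->
  (uncongested b n.+1 -> T <= f n.+1) ->
  (uncongested b n.+1 -> f n.+1 = T -> (m <= n.+1)%N) ->
  m%:R * (n'%:R - n%:R) <= users_paying n' - users_paying n /\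
  (users_paying n' - users_paying n = m%:R * (n'%:R - n%:R) ->
   (n'%:R - n%:R) * congestion b T m.-1 <= n'%:R * f n' - n%:R * f n).
Proof.
move=> not_top Hn Hn' T_le le_m; rewrite (users_paying_eq0 not_top) subr0.
have [lt_nn' | le_n'n] := ltnP n n'.
  have [fn' fn'T] := Hn' (leq_ltn_trans (leq0n n) lt_nn').
  have fn1 := uncongestedW b_gt0 lt_nn' fn'.
  have fn1T := T_le fn1.
  have n'E : n' = n.+1.
    apply/eqP; rewrite eqn_leq lt_nn' andbT leqNgt; apply/negP => lt_n1n'.
    have := congestion_lt b_gt0 w_gt0 lt_n1n' fn'; lra.
  subst n'; have {fn'T fn1T} fn1E : f n.+1 = T by lra.
  have le_mn1 := le_m fn1 fn1E.
  have T_gt0 : 0 < T by rewrite -fn1E congestion_gt0.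
  have fn := uncongestedW b_gt0 (leqnSn n) fn1.
  rewrite (users_payingE fn1E) -natr1 addrAC subrr add0r mulr1; split.
    by rewrite natr1 ler_nat.
  move=> _; rewrite natr1 (mul_congestionB w fn fn1) fn1E -natr1 addrAC subrr add0r !mul1r.
  by apply: (congestion_le b_gt0 T_gt0) fn; rewrite -ltnS prednK.
have users_n' : users_paying n' = 0.
  apply: users_paying_eq0 => -[n'_gt0 fn'T]; apply: not_top.
  have n_gt0 := leq_trans n'_gt0 le_n'n; have [fn fnT] := Hn n_gt0.
  by split=> //; apply: le_anti; rewrite fnT -fn'T congestion_le.
rewrite users_n'; have : n'%:R <= n%:R :> R by rewrite ler_nat.
have : 0 <= m%:R :> R by [].
split; first by nra.
move=> eq_users; have m_pos : 0 < m%:R :> R by rewrite ltr0n.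
have /eqP : n'%:R = n%:R :> R by nra.
by rewrite eqr_nat => /eqP ->; rewrite !subrr mul0r.
Qed.

Lemma station_balance n n' :
  ((0 < n)%N -> uncongested b n /\ f n <= T) ->
  ((0 < n')%N -> uncongested b n' /\ f n' <= T) ->
  ((0 < n)%N -> f n = T -> (n <= m)%N) ->
  (~ ((0 < n)%N /\ f n = T) -> uncongested b n.+1 -> T <= f n.+1) ->
  (uncongested b n.+1 -> f n.+1 = T -> (m <= n.+1)%N) ->
  m%:R * (n'%:R - n%:R) <= users_paying n' - users_paying n /\
  (users_paying n' - users_paying n = m%:R * (n'%:R - n%:R) ->
   (n'%:R - n%:R) * congestion b T m.-1 <= n'%:R * f n' - n%:R * f n).
Proof.
move=> Hn Hn' le_nm T_le le_m.
have [/andP[n_gt0 /eqP fnT] | not_top] := boolP ((0 < n)%N && (f n == T)).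
  have [fn _] := Hn n_gt0.
  have [lower upper] := balance_saturated n_gt0 fn fnT (le_nm n_gt0 fnT) Hn'.
  by split=> // _.
have {}not_top : ~ ((0 < n)%N /\ f n = T).
  by case=> n_gt0 /eqP fnT; rewrite n_gt0 fnT in not_top.
exact: balance_unsaturated (T_le not_top) le_m.
Qed.

End StationBalance.

Section Profiles.
Variables (M N : nat).
Implicit Types (a : profile M N) (i l : 'I_M) (j k s : 'I_N) (X : {set 'I_M}).

Definition occupancy a j : nat := #|[set l | a l == j]|.

Lemma upd_id a i : upd a i (a i) = a.
Proof. by apply/ffunP => k; rewrite ffunE; case: eqP => // ->. Qed.

Lemma occupancy_upd a i j : a i != j -> occupancy (upd a i j) j = (occupancy a j).+1.
Proof.
move=> aij; rewrite /occupancy; have -> : [set l | upd a i j l == j] = i |: [set l | a l == j].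
  by apply/setP => l; rewrite !inE ffunE; case: (eqVneq l i) => [-> | _]; rewrite ?eqxx.
by rewrite cardsU1 inE aij.
Qed.

Lemma occupancy_gt0 a l : (0 < occupancy a (a l))%N.
Proof. by apply/card_gt0P; exists l; rewrite inE. Qed.

Lemma occupancy_gt0P a j : (0 < occupancy a j)%N -> exists l, a l = j.
Proof. by case/card_gt0P => l; rewrite inE => /eqP; exists l. Qed.

Lemma sum_by_station (R : nmodType) (f : 'I_N -> R) a :
  \sum_l f (a l) = \sum_j f j *+ occupancy a j.
Proof.
rewrite (partition_big a xpredT) //=; apply: eq_bigr => j _.
rewrite -sumr_const; apply: eq_big => [l|l /eqP ->]; by rewrite ?inE.
Qed.

Lemma sum_occupancy a : \sum_j occupancy a j = M.
Proof.
have := sum_by_station (fun=> 1%N) a.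
rewrite sum1_card card_ord => ->.
by apply: eq_bigr => j _; rewrite natn.
Qed.

Lemma sum_occupancyR (R : pzSemiRingType) a : \sum_j (occupancy a j)%:R = M%:R :> R.
Proof. by rewrite -natr_sum sum_occupancy. Qed.

Definition relocate a j k (X : {set 'I_M}) : profile M N :=
  [ffun l => if a l == j then k else if l \in X then j else a l].

Lemma occupancy_relocate_to a j k X : j != k ->
  (occupancy (relocate a j k X) j <= #|X|)%N.
Proof.
move=> jk; apply/subset_leq_card/subsetP => l; rewrite !inE ffunE.
case: ifP => [_ | alj]; first by rewrite eq_sym (negbTE jk).
by case: ifP => // _; rewrite alj.
Qed.

Lemma occupancy_relocate_from a j k X : j != k -> X \subset [set l | a l == k] ->
  (occupancy (relocate a j k X) k <= occupancy a j + (occupancy a k - #|X|))%N.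
Proof.
move=> jk X_k; have -> : #|X| = #|[set l | a l == k] :&: X| by rewrite (setIidPr X_k).
rewrite /occupancy -cardsD.
apply: leq_trans (leq_card_setU _ _); apply/subset_leq_card/subsetP => l.
rewrite !inE ffunE; case: (a l == j) => //=.
by case: (l \in X); rewrite ?(negbTE jk) //= => ->.
Qed.

Lemma occupancy_relocate_other a j k X s : s != j -> s != k ->
  (occupancy (relocate a j k X) s <= occupancy a s)%N.
Proof.
move=> sj sk; apply/subset_leq_card/subsetP => l; rewrite !inE ffunE.
case: ifP => _; first by rewrite eq_sym (negbTE sk).
by case: ifP => // _; rewrite eq_sym (negbTE sj).
Qed.

End Profiles.

Section Dynamics.
Variables (R : realType) (M N : nat) (h : 'I_M -> 'I_N -> R) (sigma2 : R) (gamma : 'I_M -> R).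
Implicit Types (a : profile M N) (i : 'I_M).

Local Notation in_argmin := (in_argmin h sigma2 gamma).

Definition stable a := forall i, in_argmin a i (a i).

Lemma stable_nash a : stable a -> nash h sigma2 gamma a.
Proof.
move=> a_stable i j; have := a_stable i j; rewrite /lex_le /mapc_obj /= upd_id.
by case=> [/ltW | [-> _]].
Qed.

Lemma in_argmin_exists a i : exists j, in_argmin a i j.
Proof.
pose c j := (mapc_obj h sigma2 gamma a i j).1.
pose l j := (mapc_obj h sigma2 gamma a i j).2.
have [j1 _ c_min] := @arg_minP _ _ _ (a i) xpredT c isT.
have [j2 /eqP c_j2 l_min] := @arg_minP _ _ _ j1 [pred j | c j == c j1] l (eqxx _).
exists j2 => j; rewrite /lex_le -/(c j2) -/(c j) -/(l j2) -/(l j) c_j2.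
have [lt_c | ] := ltP (c j1) (c j); first by left.
rewrite le_eqVlt => /orP[/eqP c_j | ]; last by rewrite ltNge c_min.
by right; split; [rewrite c_j | apply: l_min; rewrite inE c_j].
Qed.

Definition best_response a i : 'I_N :=
  proj1_sig (constructive_indefinite_description _ (in_argmin_exists a i)).

Lemma best_responseP a i : in_argmin a i (best_response a i).
Proof. exact: proj2_sig (constructive_indefinite_description _ (in_argmin_exists a i)). Qed.

Definition mapc_update (t : nat) a : profile M N :=
  [ffun i : 'I_M => if (i : nat) == (t %% M)%N then
     if excluded_middle_informative (in_argmin a i (a i)) then a i else best_response a i
   else a i].

Fixpoint mapc_run a (t : nat) : profile M N :=
  if t is t'.+1 then mapc_update t' (mapc_run a t') else a.

Lemma mapc_update_step t a : mapc_step h sigma2 gamma t a (mapc_update t a).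
Proof.
move=> i iE; split=> [k ki|].
  by rewrite ffunE -iE; case: eqP => // /val_inj k_i; rewrite k_i eqxx in ki.
rewrite ffunE iE eqxx.
by destruct excluded_middle_informative; split=> // _; apply: best_responseP.
Qed.

Lemma mapc_run_traj a : mapc_traj h sigma2 gamma a (mapc_run a).
Proof. by split=> // t; apply: mapc_update_step. Qed.

Lemma steady_stateE a : steady_state h sigma2 gamma a <-> stable a.
Proof.
split=> [a_steady i | a_stable tr [tr0 tr_step] t].
  have := congr1 (fun x : profile M N => x i) (a_steady _ (mapc_run_traj a) i.+1).
  rewrite /= (a_steady _ (mapc_run_traj a) i) ffunE modn_small // eqxx.
  by destruct excluded_middle_informative => // <-; apply: best_responseP.
elim: t => // t IH; apply/ffunP => k.
have M_gt0 : (0 < M)%N by apply: leq_ltn_trans (ltn_ord k).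
pose i := Ordinal (ltn_pmod t M_gt0).
have [k_fixed [i_fixed _]] := tr_step t i erefl; rewrite IH in k_fixed i_fixed.
by have [-> | /k_fixed] := eqVneq k i; [apply: i_fixed; apply: a_stable |].
Qed.

End Dynamics.

Section Symmetric.
Variables (R : realType) (M N : nat) (h : 'I_M -> 'I_N -> R) (sigma2 : R) (gamma : 'I_M -> R).
Variables (b : R) (hb : 'I_N -> R).
Hypotheses (sigma2_gt0 : 0 < sigma2) (hb_gt0 : forall j, 0 < hb j) (b_gt0 : 0 < b).
Hypotheses (h_sym : forall i j, h i j = hb j) (beta_sym : forall i, beta gamma i = b).
Implicit Types (a : profile M N) (i l : 'I_M) (j k : 'I_N).

Local Notation cost := (cost h sigma2 gamma).
Local Notation nash := (nash h sigma2 gamma).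

Definition weight j : R := sigma2 / hb j * b.

Local Notation F j := (congestion b (weight j)).

Definition station_cost j (n : nat) : \bar R :=
  if uncongested b n then (F j n)%:E else +oo%E.

Lemma weight_gt0 j : 0 < weight j.
Proof. by rewrite mulr_gt0 ?divr_gt0. Qed.

Lemma load_occupancy a j : load gamma a j = (occupancy a j)%:R * b.
Proof.
rewrite /load (eq_bigr (fun=> b)) // (eq_bigl (mem [set l | a l == j])) => [|l].
  by rewrite sumr_const mulr_natl.
by rewrite !inE.
Qed.

Lemma costE a l : cost l a = station_cost (a l) (occupancy a (a l)).
Proof.
by rewrite /cost /station_cost /uncongested /congestion /weight load_occupancy beta_sym h_sym.
Qed.

Lemma cost_upd a l j : a l != j -> cost l (upd a l j) = station_cost j (occupancy a j).+1.
Proof. by move=> alj; rewrite costE ffunE eqxx occupancy_upd. Qed.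

Lemma station_costE j n : uncongested b n -> station_cost j n = (F j n)%:E.
Proof. by rewrite /station_cost => ->. Qed.

Lemma station_cost_oo j n : ~~ uncongested b n -> station_cost j n = +oo%E.
Proof. by rewrite /station_cost => /negbTE ->. Qed.

Lemma station_cost_le j n n' : (n <= n')%N -> (station_cost j n <= station_cost j n')%E.
Proof.
move=> le_nn'; have [fn' | nfn'] := boolP (uncongested b n'); last first.
  by rewrite (station_cost_oo _ nfn') leey.
rewrite !station_costE ?lee_fin ?(uncongestedW b_gt0 le_nn') //.
exact: (congestion_le b_gt0 (weight_gt0 j) le_nn' fn').
Qed.

Lemma station_cost_lt j n n' : (n < n')%N -> uncongested b n' ->
  (station_cost j n < station_cost j n')%E.
Proof.
move=> lt_nn' fn'; rewrite !station_costE ?lte_fin ?(uncongestedW b_gt0 (ltnW lt_nn')) //.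
exact: (congestion_lt b_gt0 (weight_gt0 j) lt_nn' fn').
Qed.

Lemma stable_tie a l j : stable h sigma2 gamma a -> a l != j ->
  station_cost (a l) (occupancy a (a l)) = station_cost j (occupancy a j).+1 ->
  (occupancy a (a l) <= (occupancy a j).+1)%N.
Proof.
move=> a_stable alj tie; have := a_stable l j.
rewrite /lex_le /mapc_obj /= upd_id cost_upd // costE tie ltxx => -[// | [_]].
by rewrite !load_occupancy occupancy_upd // ler_pM2r // ler_nat.
Qed.

Lemma nash_uncongested a : nash a -> (exists a0, feasible gamma a0) ->
  forall l, uncongested b (occupancy a (a l)).
Proof.
move=> a_nash [a0 a0_feas] l; apply/negPn/negP => congested.
have fa0 j : uncongested b (occupancy a0 j).
  by rewrite /uncongested -load_occupancy subr_gt0.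
have no_room j : j != a l -> ~~ uncongested b (occupancy a j).+1.
  move=> j_al; apply: contraL (a_nash l j) => fj.
  by rewrite cost_upd 1?eq_sym // costE station_cost_oo // station_costE // leye_eq.
have below j n : ~~ uncongested b n -> (occupancy a0 j < n)%N.
  by move=> nfn; rewrite ltnNge; apply: contra nfn => /uncongestedW; apply.
have : \sum_j (occupancy a0 j)%:R < \sum_j (occupancy a j)%:R :> R.
  apply: (@ler_lt_sum _ _ _ _ (a l)) => [j|]; last by rewrite ltr_nat below.
  have [-> | j_al] := eqVneq j (a l); first by rewrite ler_nat ltnW ?below.
  by rewrite ler_nat -ltnS below ?no_room.
by rewrite !sum_occupancyR ltxx.
Qed.

Lemma sum_users_paying a (T : R) :
  \sum_j users_paying b (weight j) T (occupancy a j) =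
  \sum_l (F (a l) (occupancy a (a l)) == T)%:R.
Proof.
rewrite (sum_by_station (fun j => (F j (occupancy a j) == T)%:R)).
by apply: eq_bigr => j _; rewrite /users_paying mulr_natl.
Qed.

Section ParetoEfficiency.
Variables (a a' : profile M N) (top : 'I_M) (k1 : 'I_N).

Local Notation n := (occupancy a).
Local Notation n' := (occupancy a').
Local Notation ca l := (F (a l) (n (a l))).
Local Notation ca' l := (F (a' l) (n' (a' l))).
Local Notation T := (ca top).

Hypotheses (a_stable : stable h sigma2 gamma a)
  (a_uncongested : forall l, uncongested b (n (a l)))
  (le_cost : forall l, (cost l a' <= cost l a)%E)
  (top_max : forall l, ca l <= T)
  (k1_top : (0 < n k1)%N) (k1_T : F k1 (n k1) = T)
  (k1_max : forall k, (0 < n k)%N -> F k (n k) = T -> (n k <= n k1)%N).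

Lemma cost_stable l : cost l a = (ca l)%:E.
Proof. by rewrite costE station_costE. Qed.

Lemma a'_uncongested l : uncongested b (n' (a' l)).
Proof.
apply/negPn/negP => congested; have := le_cost l.
by rewrite cost_stable costE station_cost_oo.
Qed.

Lemma cost_dominating l : cost l a' = (ca' l)%:E.
Proof. by rewrite costE station_costE ?a'_uncongested. Qed.

Lemma le_ca l : ca' l <= ca l.
Proof. by have := le_cost l; rewrite cost_stable cost_dominating lee_fin. Qed.

Lemma balance_at j :
  (n k1)%:R * ((n' j)%:R - (n j)%:R) <=
    users_paying b (weight j) T (n' j) - users_paying b (weight j) T (n j) /\
  (users_paying b (weight j) T (n' j) - users_paying b (weight j) T (n j) =
     (n k1)%:R * ((n' j)%:R - (n j)%:R) ->
   ((n' j)%:R - (n j)%:R) * congestion b T (n k1).-1 <=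
     (n' j)%:R * F j (n' j) - (n j)%:R * F j (n j)).
Proof.
have top_station k : (0 < n k)%N -> uncongested b (n k) /\ F k (n k) <= T.
  by case/occupancy_gt0P => l <-; split; [apply: a_uncongested | apply: top_max].
have top_station' k : (0 < n' k)%N -> uncongested b (n' k) /\ F k (n' k) <= T.
  case/occupancy_gt0P => l <-; split; first exact: a'_uncongested.
  exact: le_trans (le_ca l) (top_max l).
have no_cheaper k : ~ ((0 < n k)%N /\ F k (n k) = T) ->
    uncongested b (n k).+1 -> T <= F k (n k).+1.
  move=> not_top fk1; have top_k : a top != k.
    by apply/eqP => top_k; apply: not_top; rewrite -top_k occupancy_gt0.
  have := stable_nash a_stable top k.
  by rewrite cost_upd // cost_stable station_costE // lee_fin.
have k1_tie k : uncongested b (n k).+1 -> F k (n k).+1 = T -> (n k1 <= (n k).+1)%N.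
  move=> fk1 tie; have [<- | k1_k] := eqVneq k1 k; first exact: leqnSn.
  case/occupancy_gt0P: k1_top => l al; rewrite -al.
  apply: stable_tie; rewrite ?al // !station_costE ?al //; first by rewrite k1_T tie.
  by rewrite -al.
have fm : uncongested b (n k1) by case/occupancy_gt0P: k1_top => l <-.
exact: (station_balance b_gt0 (weight_gt0 j) k1_top fm (top_station j) (top_station' j)
  (@k1_max j) (no_cheaper j) (k1_tie j)).
Qed.

Lemma users_paying_sum_le :
  \sum_j (users_paying b (weight j) T (n' j) - users_paying b (weight j) T (n j)) <= 0.
Proof.
rewrite sumrB !sum_users_paying subr_le0; apply: ler_sum => l _.
case: eqP => [ca'T | _]; last by case: eqP.
have -> : ca l = T by apply: le_anti; rewrite top_max -ca'T le_ca.
by rewrite eqxx.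
Qed.

Lemma total_cost_le : \sum_l ca l <= \sum_l ca' l.
Proof.
have balance_lower j := proj1 (balance_at j).
have balance_upper j := proj2 (balance_at j).
rewrite -subr_ge0 (sum_by_station (fun j => F j (n' j))) (sum_by_station (fun j => F j (n j))).
have sumD0 : \sum_j ((n' j)%:R - (n j)%:R) = 0 :> R.
  by rewrite sumrB !sum_occupancyR subrr.
rewrite -sumrB; apply: (sum_balance (Q := congestion b T (n k1).-1) sumD0
  users_paying_sum_le balance_lower).
by move=> j /balance_upper; rewrite !mulr_natl.
Qed.

End ParetoEfficiency.

Lemma stable_pareto_efficient a : stable h sigma2 gamma a ->
  (exists a0, feasible gamma a0) -> pareto_efficient h sigma2 gamma a.
Proof.
move=> a_stable feas a' [le_cost [p lt_p]].
have a_unc := nash_uncongested (stable_nash a_stable) feas.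
pose ca l := F (a l) (occupancy a (a l)).
have [top _ top_max] := @arg_maxP _ _ _ p xpredT ca isT.
pose S := [pred k | (0 < occupancy a k)%N && (F k (occupancy a k) == ca top)].
have S_top : a top \in S by rewrite inE /= occupancy_gt0 eqxx.
have [k1 /andP[k1_top /eqP k1_T] k1_max] := @arg_maxP _ _ _ (a top) S (occupancy a) S_top.
have {}k1_max k : (0 < occupancy a k)%N -> F k (occupancy a k) = ca top ->
    (occupancy a k <= occupancy a k1)%N.
  by move=> k_gt0 k_T; apply: k1_max; rewrite inE /= k_gt0 k_T eqxx.
have := total_cost_le a_stable a_unc le_cost (fun l => top_max l isT) k1_top k1_T k1_max.
apply/negP; rewrite -ltNge; apply: (ler_lt_sum (k := p) (le_ca a_unc le_cost)).
by have := lt_p; rewrite (cost_stable a_unc) (cost_dominating a_unc le_cost) lte_fin.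
Qed.

Section Relocation.
Variables (a : profile M N) (j k : 'I_N) (X : {set 'I_M}).

Local Notation x := (occupancy a j).
Local Notation y := (occupancy a k).
Local Notation a' := (relocate a j k X).

Hypotheses (jk : j != k) (X_k : X \subset [set l | a l == k]) (cardX : #|X| = x.+1)
  (crowded : (x.+1 < y)%N) (fx1 : uncongested b x.+1) (fy : uncongested b y)
  (tie : F j x.+1 = F k y).

Lemma relocate_cost_to l : a' l = k -> (cost l a' <= station_cost k y.-1)%E.
Proof.
move=> a'l; rewrite costE a'l; apply: station_cost_le.
rewrite -subn1; apply: leq_trans (occupancy_relocate_from jk X_k) _.
by rewrite cardX; lia.
Qed.

Lemma relocate_cost_lt i : a i = k -> i \notin X -> (cost i a' < cost i a)%E.
Proof.
move=> aik iX; apply: le_lt_trans (relocate_cost_to _) _.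
  by rewrite ffunE aik eq_sym (negbTE jk) (negbTE iX).
by rewrite costE aik station_cost_lt // prednK // (leq_ltn_trans _ crowded).
Qed.

Lemma relocate_cost_le l : (cost l a' <= cost l a)%E.
Proof.
have a'E : a' l = if a l == j then k else if l \in X then j else a l by rewrite ffunE.
have [alj | alj] := eqVneq (a l) j; last rewrite (negbTE alj) in a'E.
  (* The stations [j] and [k] cost the same one mobile higher, and [k] is the more
     crowded one, so [k] with [y - 1] mobiles costs no more than [j] with [x]. *)
  rewrite alj eqxx in a'E; apply: le_trans (relocate_cost_to a'E) _.
  have fx : uncongested b x := uncongestedW b_gt0 (leqnSn x) fx1.
  rewrite [cost l a]costE alj !station_costE ?lee_fin //; last first.
    by rewrite (uncongestedW b_gt0 (leq_pred y)).
  by apply: (congestion_pred_le b_gt0 (weight_gt0 j)); rewrite ?prednK //; lia.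
have [lX | lX] := boolP (l \in X); last rewrite (negbTE lX) in a'E.
  rewrite lX in a'E; have alk : a l = k by move/subsetP/(_ l lX): X_k; rewrite inE => /eqP.
  have -> : cost l a = station_cost j x.+1 by rewrite costE alk !station_costE // tie.
  by rewrite costE a'E station_cost_le // -cardX occupancy_relocate_to.
have [alk | alk] := eqVneq (a l) k.
  apply: le_trans (relocate_cost_to _) _; first by rewrite a'E alk.
  by rewrite [cost l a]costE alk station_cost_le // leq_pred.
by rewrite !costE a'E station_cost_le // occupancy_relocate_other.
Qed.

End Relocation.

Lemma tie_pareto_improvement a i j :
  (forall l, uncongested b (occupancy a (a l))) -> a i != j ->
  cost i (upd a i j) = cost i a -> ((occupancy a j).+1 < occupancy a (a i))%N ->
  exists a', pareto_dominated h sigma2 gamma a a'.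
Proof.
move=> a_unc ij tie crowded; set k := a i in ij tie crowded.
set x := occupancy a j in tie crowded; set y := occupancy a k in crowded.
have fy : uncongested b y := a_unc i.
rewrite cost_upd // costE -/k -/y in tie.
have fx1 : uncongested b x.+1.
  by apply/negPn/negP => fx1; move: tie; rewrite station_cost_oo // station_costE.
have {}tie : F j x.+1 = F k y by move: tie; rewrite !station_costE // => -[].
have card_rest : #|[set l | a l == k] :\ i| = y.-1.
  by rewrite /y /occupancy (cardsD1 i [set l | a l == k]) inE eqxx.
have [s [s_uniq s_size s_sub]] :
    exists s, [/\ uniq s, size s = x.+1 & {subset s <= [set l | a l == k] :\ i}].
  by apply/card_geqP; rewrite card_rest -ltnS prednK // (leq_ltn_trans _ crowded).
pose X := [set l in s].
have X_k : X \subset [set l | a l == k].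
  by apply/subsetP => l /[!inE] /s_sub /[!inE] /andP[].
have iX : i \notin X by apply/negP => /[!inE] /s_sub; rewrite !inE eqxx.
have cardX : #|X| = x.+1 by rewrite cardsE -s_size; apply/card_uniqP.
have jk : j != k by rewrite eq_sym.
exists (relocate a j k X); split; first exact: relocate_cost_le.
by exists i; apply: relocate_cost_lt.
Qed.

Lemma nash_pareto_stable a : nash a -> pareto_efficient h sigma2 gamma a ->
  (exists a0, feasible gamma a0) -> stable h sigma2 gamma a.
Proof.
move=> a_nash a_pareto feas i j; have a_unc := nash_uncongested a_nash feas.
rewrite /lex_le /mapc_obj /= upd_id.
have [<- | ij] := eqVneq (a i) j; first by right; rewrite upd_id.
have := a_nash i j; rewrite le_eqVlt => /orP[/eqP tie | ]; last by left.
right; split=> //; rewrite !load_occupancy occupancy_upd // ler_pM2r // ler_nat leqNgt.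
apply/negP => crowded.
by have [a' ?] := tie_pareto_improvement a_unc ij (esym tie) crowded; apply: (a_pareto a').
Qed.

End Symmetric.

Lemma symmetric_parameters (R : realType) (M N : nat) (h : 'I_M -> 'I_N -> R)
    (gamma : 'I_M -> R) :
  (forall i j, 0 < h i j) -> (forall i, 0 < gamma i) ->
  (forall i i' j, h i j = h i' j) -> (forall i i', beta gamma i = beta gamma i') ->
  exists b (hb : 'I_N -> R), [/\ 0 < b, forall j, 0 < hb j,
    forall i j, h i j = hb j & forall i, beta gamma i = b].
Proof.
move=> h_gt0 gamma_gt0 h_sym beta_sym; have [M0 | M_gt0] := posnP M.
  have no_mobile (i : 'I_M) : False by move: (ltn_ord i); rewrite [X in (_ < X)%N]M0.
  by exists 1, (fun=> 1); split=> // i; case: (no_mobile i).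
pose i0 := Ordinal M_gt0.
exists (beta gamma i0), (h i0); split=> [|j|i j|i]; last exact: beta_sym.
- by rewrite /beta divr_gt0 // addr_gt0.
- exact: h_gt0.
- exact: h_sym.
Qed.

Theorem proposition4 (R : realType) (M N : nat)
  (h : 'I_M -> 'I_N -> R) (sigma2 : R) (gamma : 'I_M -> R)
  (Hsigma : 0 < sigma2)
  (Hh : forall i j, 0 < h i j)
  (Hgamma : forall i, 0 < gamma i)
  (Hfeas : exists a : profile M N, feasible gamma a)
  (Hsym_h : forall (i i' : 'I_M) (j : 'I_N), h i j = h i' j)
  (Hsym_beta : forall i i' : 'I_M, beta gamma i = beta gamma i') :
  forall a : profile M N,
    steady_state h sigma2 gamma a <->
    (nash h sigma2 gamma a /\ pareto_efficient h sigma2 gamma a).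
Proof.
move=> a; rewrite steady_stateE.
have [b [hb [b_gt0 hb_gt0 h_sym beta_sym]]] :=
  symmetric_parameters Hh Hgamma Hsym_h Hsym_beta.
split=> [a_stable | [a_nash a_pareto]].
  split; first exact: stable_nash.
  exact: stable_pareto_efficient Hsigma hb_gt0 b_gt0 h_sym beta_sym _ a_stable Hfeas.
exact: nash_pareto_stable Hsigma hb_gt0 b_gt0 h_sym beta_sym _ a_nash a_pareto Hfeas.
Qed.
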